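(* Let $D$ be a small category, $\mathcal F$ a collection of $D$-orbits, and $X$ a $D$-space admitting a (non-relative) $D$-CW structure of type $\mathcal F$. Then $X$ is a $D$-space of type $\mathcal F$.
   Context: A $D$-space is a functor $D\to\mathrm{Top}$; a $D$-orbit is a $D$-space whose colimit is a point. Topological spaces are regarded as constant $D$-spaces. A relative $D$-CW structure of type $\mathcal F$ on $X$ is a sequence $X^{-1}\hookrightarrow X^0\hookrightarrow X^1\hookrightarrow\cdots\hookrightarrow X$ with $X=\operatorname{colim}_i X^i$, such that for each $i\ge 0$, $X^i$ is the pushout of $X^{i-1}\leftarrow S^{i-1}\times A_i\hookrightarrow D^i\times A_i$, where each $A_i$ is a disjoint union of $D$-orbits in $\mathcal F$ (and $S^{-1}=\emptyset$). It is a (non-relative) $D$-CW structure if $X^{-1}$ is the constant empty $D$-space. For $x$ a point of $\operatorname{colim}_D X$, the orbit $O_x$ is the pullback of $X\to\operatorname{colim}_D X$ (constant $D$-space) along $\{x\}\hookrightarrow \operatorname{colim}_D X$. $X$ is of type $\mathcal F$ if $O_x\in\mathcal F$ for every $x\in\operatorname{colim}_D X$ (orbits being considered up to isomorphism). *)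

From HB Require Import structures.
From mathcomp Require Import all_boot all_order all_algebra.
From mathcomp Require Import all_classical all_reals all_analysis.
From mathcomp Require Import Rstruct Rstruct_topology.
From Stdlib Require Import Rdefinitions.

Set Implicit Arguments.
Unset Strict Implicit.
Unset Printing Implicit Defensive.

Import Order.TTheory GRing.Theory Num.Theory.
Local Open Scope classical_set_scope.
Local Open Scope ring_scope.

Record Cat := {
  Obj : Type;
  Hom : Obj -> Obj -> Type;
  idm : forall a, Hom a a;
  comp : forall a b c, Hom b c -> Hom a b -> Hom a c;
  comp_idl : forall a b (f : Hom a b), comp (idm b) f = f;
  comp_idr : forall a b (f : Hom a b), comp f (idm a) = f;
  comp_assoc : forall a b c e (h : Hom c e) (g : Hom b c) (f : Hom a b),
      comp h (comp g f) = comp (comp h g) f }.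

Record DSpace (D : Cat) := {
  sp :> Obj D -> topologicalType;
  act : forall a b, Hom a b -> sp a -> sp b;
  act_cont : forall a b (f : Hom a b), continuous (act f);
  act_id : forall a (x : sp a), act (idm a) x = x;
  act_comp : forall a b c (g : Hom b c) (f : Hom a b) (x : sp a),
      act (comp g f) x = act g (act f x) }.
Arguments act {D} _ {a b} f x.

Unset Implicit Arguments.
Record DMap (D : Cat) (X Y : DSpace D) := {
  dmap :> forall d, X d -> Y d;
  dmap_cont : forall d : Obj D, continuous (dmap d);
  dmap_nat : forall a b (f : Hom a b) (x : X a),
      dmap b (act X f x) = act Y f (dmap a x) }.

Arguments DMap {D} X Y.
Arguments dmap {D X Y} _ d _.
Arguments dmap_cont {D X Y} _ d.
Arguments dmap_nat {D X Y} _ {a b} f x.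
Set Implicit Arguments.

Definition DIso (D : Cat) (X Y : DSpace D) : Prop :=
  exists (f : DMap X Y) (g : DMap Y X),
    (forall d x, g d (f d x) = x) /\ (forall d y, f d (g d y) = y).

Definition EmptyD (D : Cat) (X : DSpace D) : Prop := forall d, X d -> False.

Lemma prodC_cont (T U V : topologicalType) (f : U -> V) :
  continuous f -> continuous (fun p : T * U => (p.1, f p.2)).
Proof.
move=> fc [a b] W /= [[P Q]] /= [Pa Qfb] PQW.
exists (P, f @^-1` Q); first by split => //; exact: fc.
by case=> x y /= [Px Qy]; apply: PQW.
Qed.

Definition ProdC (D : Cat) (T : topologicalType) (A : DSpace D) : DSpace D.
Proof.
refine (@Build_DSpace D (fun d => (T * A d)%type)
  (fun a b f p => (p.1, act A f p.2)) _ _ _).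
- by move=> a b f; apply: prodC_cont; exact: act_cont.
- by move=> a [t x] /=; rewrite act_id.
- by move=> a b c g f [t x] /=; rewrite act_comp.
Defined.

Definition sqnorm (n : nat) (v : 'rV[R]_n) : R := \sum_(i < n) v ord0 i ^+ 2.
Definition Disk (n : nat) : topologicalType :=
  set_type [set v : 'rV[R]_n | sqnorm v <= 1].
Definition Sphere (n : nat) : topologicalType :=
  set_type [set v : 'rV[R]_n | sqnorm v = 1].   (* this is S^(n-1) *)

Definition sphere_in_disk (n : nat) (s : Sphere n) : Disk n.
Proof.
exists (val s); apply/mem_set => /=.
by move: (set_valP s) => /= ->.
Defined.

Definition IsPushout (D : Cat) (P Q X0 X1 : DSpace D)
  (u : forall d, P d -> X0 d) (v : forall d, P d -> Q d)
  (j : forall d, X0 d -> X1 d) (w : forall d, Q d -> X1 d) : Prop :=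
  (forall d p, j d (u d p) = w d (v d p)) /\
  forall (Y : DSpace D) (a : DMap X0 Y) (b : DMap Q Y),
    (forall d p, a d (u d p) = b d (v d p)) ->
    (exists h : DMap X1 Y,
        (forall d x, h d (j d x) = a d x) /\ (forall d q, h d (w d q) = b d q)) /\
    (forall h h' : DMap X1 Y,
        (forall d x, h d (j d x) = a d x) -> (forall d q, h d (w d q) = b d q) ->
        (forall d x, h' d (j d x) = a d x) -> (forall d q, h' d (w d q) = b d q) ->
        forall d y, h d y = h' d y).

Definition IsCoprod (D : Cat) (I : Type) (A : I -> DSpace D) (S : DSpace D)
  (inj : forall i, DMap (A i) S) : Prop :=
  forall (Y : DSpace D) (g : forall i, DMap (A i) Y),
    (exists h : DMap S Y, forall i d a, h d (inj i d a) = g i d a) /\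
    (forall h h' : DMap S Y,
        (forall i d a, h d (inj i d a) = g i d a) ->
        (forall i d a, h' d (inj i d a) = g i d a) ->
        forall d y, h d y = h' d y).

Definition IsSeqColim (D : Cat) (Xs : nat -> DSpace D)
  (js : forall n, DMap (Xs n) (Xs n.+1)) (X : DSpace D)
  (ins : forall n, DMap (Xs n) X) : Prop :=
  (forall n d x, ins n.+1 d (js n d x) = ins n d x) /\
  forall (Y : DSpace D) (g : forall n, DMap (Xs n) Y),
    (forall n d x, g n.+1 d (js n d x) = g n d x) ->
    (exists h : DMap X Y, forall n d x, h d (ins n d x) = g n d x) /\
    (forall h h' : DMap X Y,
        (forall n d x, h d (ins n d x) = g n d x) ->
        (forall n d x, h' d (ins n d x) = g n d x) ->
        forall d y, h d y = h' d y).

Definition IsColimTop (D : Cat) (X : DSpace D) (C : topologicalType)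
  (c : forall d, X d -> C) : Prop :=
  (forall d : Obj D, continuous (c d)) /\
  (forall a b (f : Hom a b) x, c b (act X f x) = c a x) /\
  forall (T : topologicalType) (t : forall d, X d -> T),
    (forall d : Obj D, continuous (t d)) ->
    (forall a b (f : Hom a b) x, t b (act X f x) = t a x) ->
    exists! h : C -> T, continuous h /\ forall d x, h (c d x) = t d x.

Arguments IsColimTop {D} X C c.

Definition IsOrbit (D : Cat) (X : DSpace D) : Prop :=
  forall (C : topologicalType) (c : forall d, X d -> C),
    IsColimTop X C c -> exists x0 : C, forall y : C, y = x0.

(** O is the orbit O_x: pullback of X -> colim_D X (constant) along {x} -> colim_D X *)
Definition IsFiber (D : Cat) (X : DSpace D) (C : topologicalType)
  (c : forall d, X d -> C) (x : C) (O : DSpace D) (p : DMap O X) : Prop :=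
  (forall d o, c d (p d o) = x) /\
  forall (Y : DSpace D) (g : DMap Y X),
    (forall d y, c d (g d y) = x) ->
    (exists h : DMap Y O, forall d y, p d (h d y) = g d y) /\
    (forall h h' : DMap Y O,
        (forall d y, p d (h d y) = g d y) ->
        (forall d y, p d (h' d y) = g d y) ->
        forall d y, h d y = h' d y).

Arguments IsFiber {D} X C c x O p.

Definition OfType (D : Cat) (F : DSpace D -> Prop) (X : DSpace D) : Prop :=
  forall (C : topologicalType) (c : forall d, X d -> C),
    IsColimTop X C c ->
    forall (x : C) (O : DSpace D) (p : DMap O X),
      IsFiber X C c x O p -> exists A, F A /\ DIso A O.

(** Indexing: Xs 0 = X^{-1} (empty), Xs (i.+1) = X^i. *)
Definition HasDCW (D : Cat) (F : DSpace D -> Prop) (X : DSpace D) : Prop :=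
  exists (Xs : nat -> DSpace D) (js : forall n, DMap (Xs n) (Xs n.+1))
         (ins : forall n, DMap (Xs n) X),
    EmptyD (Xs 0) /\ IsSeqColim js ins /\
    forall i : nat,
      exists (I : Type) (Ak : I -> DSpace D) (A : DSpace D)
             (inj : forall k, DMap (Ak k) A),
        (forall k, F (Ak k)) /\ IsCoprod inj /\
        exists (phi : DMap (ProdC (Sphere i) A) (Xs i))
               (Phi : DMap (ProdC (Disk i) A) (Xs i.+1)),
          IsPushout phi
            (fun d (p : ProdC (Sphere i) A d) =>
               ((sphere_in_disk p.1, p.2) : ProdC (Disk i) A d))
            (js i) Phi.

From HB Require Import structures.
From mathcomp Require Import all_boot all_order all_algebra.
From mathcomp Require Import all_classical all_reals all_analysis.
From mathcomp Require Import Rstruct Rstruct_topology.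
From Stdlib Require Import Rdefinitions Relation_Operators Eqdep Eqdep_dec PeanoNat.

(* Every point of X lies in exactly one open cell: it is Phi_i(t, a) for a unique
   i, a unique interior point t of D^i and a unique a in a unique summand A_k of
   A_i.  The cell (i, t, k) is invariant under the D-action, hence constant on
   the fibre O_x over a point x of colim_D X, so O_x is the image of
   a |-> Phi_i(t, a) on A_k.  This map lands in a single fibre because
   colim_D A_k is a point, and it is injective and closed on every component,
   hence an isomorphism A_k ~= O_x. *)

Set Implicit Arguments.
Unset Strict Implicit.
Unset Printing Implicit Defensive.

Local Open Scope classical_set_scope.

Record OpenSystem (T : Type) := {
  opens : set (set T);
  opensT : opens setT;
  opensI : forall A B, opens A -> opens B -> opens (A `&` B);
  opens_bigcup : forall (J : Type) (f : J -> set T),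
    (forall j, opens (f j)) -> opens (\bigcup_j f j) }.

Definition topology_of (T : Type) (S : OpenSystem T) : Type := T.
HB.instance Definition _ (T : Type) (S : OpenSystem T) :=
  gen_eqMixin (topology_of S).
HB.instance Definition _ (T : Type) (S : OpenSystem T) :=
  gen_choiceMixin (topology_of S).
HB.instance Definition _ (T : Type) (S : OpenSystem T) :=
  isOpenTopological.Build (topology_of S) (@opensT T S) (@opensI T S)
    (@opens_bigcup T S).

Lemma topology_of_open T (S : OpenSystem T) (A : set (topology_of S)) :
  open A = opens S A.
Proof. by []. Qed.

Definition indiscrete_system (T : Type) : OpenSystem T.
Proof.
refine {| opens := fun A : set T => A = set0 \/ A = setT |}.
- by right.
- by move=> A B [->|->] [->|->]; rewrite ?set0I ?setI0 ?setIT; auto.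
- move=> J f opf; have [[j fjT]|noT] := pselect (exists j, f j = setT).
    by right; apply/seteqP; split => // x _; exists j; rewrite ?fjT.
  left; apply/seteqP; split => // x [j _ fjx].
  by case: (opf j) fjx => [->//|fjT]; case: noT; exists j.
Defined.

Definition Indisc (T : Type) : topologicalType := topology_of (indiscrete_system T).

Lemma indisc_continuous (Z : topologicalType) (T : Type) (f : Z -> Indisc T) :
  continuous f.
Proof.
apply/continuousP => A; rewrite topology_of_open => -[->|->].
  by rewrite preimage_set0; exact: open0.
by rewrite preimage_setT; exact: openT.
Qed.

Section DMaps.
Variable D : Cat.

Definition DSet (G : Obj D -> Type) (actG : forall a b, Hom a b -> G a -> G b)
    (actG_id : forall a x, actG a a (idm a) x = x)
    (actG_comp : forall a b c (g : Hom b c) (f : Hom a b) x,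
       actG a c (comp g f) x = actG b c g (actG a b f x)) : DSpace D :=
  @Build_DSpace D (fun d => Indisc (G d)) actG
    (fun a b f => @indisc_continuous _ _ _) actG_id actG_comp.

Definition to_DSet (Z : DSpace D) G actG actG_id actG_comp
    (h : forall d, Z d -> G d)
    (h_nat : forall a b (f : Hom a b) z, h b (act Z f z) = actG a b f (h a z)) :
  DMap Z (@DSet G actG actG_id actG_comp) :=
  @Build_DMap D Z (DSet actG_id actG_comp) h (fun d => @indisc_continuous _ _ _) h_nat.

Definition comp_DMap (Y Z W : DSpace D) (g : DMap Z W) (f : DMap Y Z) : DMap Y W.
Proof.
refine (@Build_DMap D Y W (fun d y => g d (f d y)) _ _).
- by move=> d y; apply: continuous_comp; exact: dmap_cont.
- by move=> a b h y; rewrite !dmap_nat.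
Defined.

Definition id_DMap (Y : DSpace D) : DMap Y Y :=
  @Build_DMap D Y Y (fun d y => y) (fun d y => @cvg_id _ _) (fun _ _ _ _ => erefl).

Definition pair_DMap (T : topologicalType) (t : T) (Y Z : DSpace D)
    (m : DMap Y Z) : DMap Y (ProdC T Z).
Proof.
refine (@Build_DMap D Y (ProdC T Z) (fun d y => (t, m d y)) _ _).
- by move=> d y; apply: cvg_pair; [exact: cvg_cst | exact: dmap_cont].
- by move=> a b f y; rewrite /= dmap_nat.
Defined.

End DMaps.

Lemma existT_nat_inj {P : nat -> Type} {n} {x y : P n} :
  existT P n x = existT P n y -> x = y.
Proof. exact: inj_pair2_eq_dec _ Nat.eq_dec P n x y. Qed.

Lemma open_forall_in (T : topologicalType) (I : Type) (P : I -> set T) (fs : seq I) :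
  (forall f, open (P f)) -> open [set z | forall f, List.In f fs -> P f z].
Proof.
move=> oP; elim: fs => [|f fs IH].
  have -> : [set z | forall f, List.In f [::] -> P f z] = setT.
    by apply/seteqP; split => // z _ f [].
  exact: openT.
have -> : [set z | forall g, List.In g (f :: fs) -> P g z] =
          P f `&` [set z | forall g, List.In g fs -> P g z].
  apply/seteqP; split => [z Pz|z [Pfz Pz] g [<-|/Pz//]] //.
  by split => [|g gfs]; apply: Pz; [left | right].
exact: openI.
Qed.

(* Colimits of D-spaces are only given by their universal properties; mapping
   them into [Sieves] and [ClosedSieves] shows that their legs are jointly
   surjective and that closedness can be tested on the legs. *)
Section Sieves.
Variables (D : Cat) (e : Obj D).

Definition sieve (d : Obj D) := Hom d e -> Prop.

Definition sieve_act a b (g : Hom a b) (s : sieve a) : sieve b :=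
  fun f => s (comp f g).

Lemma sieve_act_id a (s : sieve a) : sieve_act (idm a) s = s.
Proof. by apply: funext => f; rewrite /sieve_act comp_idr. Qed.

Lemma sieve_act_comp a b c (g : Hom b c) (f : Hom a b) (s : sieve a) :
  sieve_act (comp g f) s = sieve_act g (sieve_act f s).
Proof. by apply: funext => h; rewrite /sieve_act comp_assoc. Qed.

Definition sieve_of (Z : DSpace D) (V : set (Z e)) d (z : Z d) : sieve d :=
  fun f => V (act Z f z).

Lemma sieve_of_nat (Z : DSpace D) (V : set (Z e)) a b (f : Hom a b) (z : Z a) :
  sieve_of V (act Z f z) = sieve_act f (sieve_of V z).
Proof. by apply: funext => g; rewrite /sieve_of /sieve_act act_comp. Qed.

Lemma sieve_of_idm (Z : DSpace D) (V : set (Z e)) (z : Z e) :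
  sieve_of V z (idm e) = V z.
Proof. by rewrite /sieve_of act_id. Qed.

Lemma sieve_of_comp (Y Z : DSpace D) (m : DMap Y Z) (V : set (Z e)) d (y : Y d) :
  sieve_of V (m d y) = sieve_of (m e @^-1` V) y.
Proof. by apply: funext => f; rewrite /sieve_of /preimage -dmap_nat. Qed.

Lemma sieve_of_setT (Y Z : DSpace D) (m : DMap Y Z) (V : set (Z e)) :
  (forall y, V (m e y)) -> forall d (y : Y d), sieve_of V (m d y) = sieve_of setT y.
Proof.
move=> mV d y; rewrite sieve_of_comp.
by have -> : m e @^-1` V = setT by apply/seteqP; split => // y' _; exact: mV.
Qed.

Definition Sieves : DSpace D := DSet sieve_act_id sieve_act_comp.

Definition classify (Z : DSpace D) (V : set (Z e)) : DMap Z Sieves :=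
  to_DSet sieve_act_id sieve_act_comp (@sieve_of_nat Z V).

Lemma classify_full (Z : DSpace D) (V : set (Z e)) :
  (forall d z, classify V d z = classify setT d z) -> forall z, V z.
Proof. by move=> VT z; rewrite -sieve_of_idm [sieve_of V z]VT /sieve_of. Qed.

(* Basic opens are the sieves avoiding finitely many arrows, so that
   [sieve_of V] is continuous exactly when [V] is closed. *)
Definition avoids d (fs : seq (Hom d e)) (s : sieve d) :=
  forall f, List.In f fs -> ~ s f.

Definition closed_sieve_system d : OpenSystem (sieve d).
Proof.
refine {| opens := fun W =>
  forall s, W s -> exists fs, avoids fs s /\ avoids fs `<=` W |}.
- by move=> s _; exists [::]; split => // f [].
- move=> A B oA oB s [As Bs].
  have [fs [sfs fsA]] := oA s As; have [gs [sgs gsB]] := oB s Bs.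
  exists (fs ++ gs); split => [f fgs|t tfgs].
    by case: (List.in_app_or _ _ _ fgs); [exact: sfs | exact: sgs].
  by split; [apply: fsA | apply: gsB] => f fin; apply: tfgs;
    apply: List.in_or_app; auto.
- move=> J W oW s [j _ Wjs]; have [fs [sfs fsW]] := oW j s Wjs.
  by exists fs; split => // t /fsW; exists j.
Defined.

Lemma sieve_act_continuous a b (g : Hom a b) :
  continuous (sieve_act g : topology_of (closed_sieve_system a) ->
                            topology_of (closed_sieve_system b)).
Proof.
apply/continuousP => W; rewrite !topology_of_open => oW s Wgs.
have [fs [sfs fsW]] := oW _ Wgs.
exists (List.map (fun f => comp f g) fs); split.
  by move=> _ /List.in_map_iff[f [<- ffs]]; exact: sfs.
by move=> t tfs; apply: fsW => f ffs; apply: tfs; exact: List.in_map.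
Qed.

Definition ClosedSieves : DSpace D :=
  @Build_DSpace D (fun d => topology_of (closed_sieve_system d)) sieve_act
    sieve_act_continuous sieve_act_id sieve_act_comp.

Lemma sieve_of_continuous (Z : DSpace D) (V : set (Z e)) d :
  closed V -> continuous (@sieve_of Z V d : Z d -> ClosedSieves d).
Proof.
move=> cV; apply/continuousP => W; rewrite topology_of_open => oW.
rewrite openE => z Wz; have [fs [zfs fsW]] := oW _ Wz.
apply: (@filterS _ _ _ [set z' | forall f, List.In f fs -> (~` (act Z f @^-1` V)) z']).
  by move=> z' z'fs; apply: fsW.
apply: open_nbhs_nbhs; split; last exact: zfs.
apply: open_forall_in => f; apply: closed_openC.
by move/continuous_closedP: (@act_cont _ Z _ _ f); exact.
Qed.

Definition classify_closed (Z : DSpace D) (V : set (Z e)) (cV : closed V) :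
  DMap Z ClosedSieves :=
  @Build_DMap D Z ClosedSieves (@sieve_of Z V)
    (fun d => @sieve_of_continuous Z V d cV) (@sieve_of_nat Z V).

Lemma closed_classified (Z : DSpace D) (V : set (Z e)) (h : DMap Z ClosedSieves) :
  (forall z, h e z (idm e) = V z) -> closed V.
Proof.
move=> hV; have oU : open [set s : ClosedSieves e | ~ s (idm e)].
  rewrite topology_of_open => s nse; exists [:: idm e].
  by split => [f [<-|[]] //|t]; apply; left.
rewrite -[V]setCK closedC.
move/continuousP: (dmap_cont h e) => /(_ _ oU).
by congr open; apply/seteqP; split => z /=; rewrite hV.
Qed.

End Sieves.

Section UniversalProperties.
Variable D : Cat.

Lemma pushout_cover (P Q X0 X1 : DSpace D) (u : forall d, P d -> X0 d)
    (v : forall d, P d -> Q d) (j : DMap X0 X1) (w : DMap Q X1) :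
  IsPushout u v j w ->
  forall d (z : X1 d), (exists x, z = j d x) \/ (exists q, z = w d q).
Proof.
move=> [_ po] d.
pose V := [set z : X1 d | (exists x, z = j d x) \/ (exists q, z = w d q)].
apply: (classify_full (V := V)).
have [_ uniq] := po (Sieves d) (classify setT) (classify setT) (fun _ _ => erefl).
apply: uniq => // d' y; apply: sieve_of_setT => {}y; rewrite /V /=; eauto.
Qed.

Lemma seqcolim_cover (Xs : nat -> DSpace D) (js : forall n, DMap (Xs n) (Xs n.+1))
    (X : DSpace D) (ins : forall n, DMap (Xs n) X) :
  IsSeqColim js ins -> forall d (z : X d), exists n x, z = ins n d x.
Proof.
move=> [_ colim] d; pose V := [set z : X d | exists n x, z = ins n d x].
apply: (classify_full (V := V)).
have [_ uniq] := colim (Sieves d) (fun n => classify setT) (fun _ _ _ => erefl).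
apply: uniq => // n d' y; apply: sieve_of_setT => {}y; rewrite /V /=; eauto.
Qed.

Lemma coprod_cover (K : Type) (B : K -> DSpace D) (S : DSpace D)
    (inj : forall k, DMap (B k) S) :
  IsCoprod inj -> forall d (z : S d), exists k b, z = inj k d b.
Proof.
move=> coprod d; pose V := [set z : S d | exists k b, z = inj k d b].
apply: (classify_full (V := V)).
have [_ uniq] := coprod (Sieves d) (fun k => classify setT).
apply: uniq => // k d' y; apply: sieve_of_setT => {}y; rewrite /V /=; eauto.
Qed.

Lemma colimtop_cover (X : DSpace D) (C : topologicalType) (c : forall d, X d -> C) :
  IsColimTop X C c -> forall y : C, exists d x, y = c d x.
Proof.
move=> [_ [_ colim]] y.
have [h [_ uniq]] := colim (Indisc Prop) (fun _ _ => True)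
  (fun d => @indisc_continuous _ _ _) (fun _ _ _ _ => erefl).
pose im (y : C) : Indisc Prop := exists d x, y = c d x.
have im_c d x : im (c d x) = True by apply: propext; split => // _; exists d, x.
have imT := etrans (esym (uniq im (conj (@indisc_continuous _ _ _) im_c)))
  (uniq (fun _ => True) (conj (@indisc_continuous _ _ _) (fun _ _ => erefl))).
suff : im y by [].
by rewrite imT.
Qed.

Lemma pushout_closed (P Q X0 X1 : DSpace D) (u : forall d, P d -> X0 d)
    (v : forall d, P d -> Q d) (j : DMap X0 X1) (w : DMap Q X1) e (V : set (X1 e)) :
  (forall a b (f : Hom a b) p, u b (act P f p) = act X0 f (u a p)) ->
  (forall a b (f : Hom a b) p, v b (act P f p) = act Q f (v a p)) ->
  IsPushout u v j w -> closed (j e @^-1` V) -> closed (w e @^-1` V) -> closed V.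
Proof.
move=> u_nat v_nat po cj cw.
have compat d p : classify_closed cj d (u d p) = classify_closed cw d (v d p).
  apply: funext => f; rewrite /= /sieve_of /preimage -u_nat -v_nat.
  by congr V; exact: po.1.
have [[h [hj hw]] _] := po.2 _ _ _ compat.
apply: (closed_classified (h := h)) => z.
by case: (pushout_cover po z) => [[x ->]|[q ->]]; rewrite ?hj ?hw /= sieve_of_idm.
Qed.

Lemma seqcolim_closed (Xs : nat -> DSpace D) (js : forall n, DMap (Xs n) (Xs n.+1))
    (X : DSpace D) (ins : forall n, DMap (Xs n) X) e (V : set (X e)) :
  IsSeqColim js ins -> (forall n, closed (ins n e @^-1` V)) -> closed V.
Proof.
move=> colim cV.
have compat n d x : classify_closed (cV n.+1) d (js n d x) = classify_closed (cV n) d x.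
  apply: funext => f; rewrite /= /sieve_of /preimage -dmap_nat.
  by congr V; exact: colim.1.
have [[h hins] _] := colim.2 _ _ compat.
apply: (closed_classified (h := h)) => z.
by have [n [x ->]] := seqcolim_cover colim z; rewrite hins /= sieve_of_idm.
Qed.

Lemma coprod_closed (K : Type) (B : K -> DSpace D) (S : DSpace D)
    (inj : forall k, DMap (B k) S) e (V : set (S e)) :
  IsCoprod inj -> (forall k, closed (inj k e @^-1` V)) -> closed V.
Proof.
move=> coprod cV; have [[h hinj] _] := coprod _ (fun k => classify_closed (cV k)).
apply: (closed_classified (h := h)) => z.
by have [k [b ->]] := coprod_cover coprod z; rewrite hinj /= sieve_of_idm.
Qed.

End UniversalProperties.

Section CoproductTags.
Variables (D : Cat) (K : Type) (B : K -> DSpace D).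

Definition tagged (d : Obj D) := {k : K & B k d}.

Definition tagged_act a b (f : Hom a b) (t : tagged a) : tagged b :=
  existT _ (projT1 t) (act (B (projT1 t)) f (projT2 t)).

Lemma tagged_act_id a (t : tagged a) : tagged_act (idm a) t = t.
Proof. by case: t => k x; rewrite /tagged_act /= act_id. Qed.

Lemma tagged_act_comp a b c (g : Hom b c) (f : Hom a b) (t : tagged a) :
  tagged_act (comp g f) t = tagged_act g (tagged_act f t).
Proof. by case: t => k x; rewrite /tagged_act /= act_comp. Qed.

Definition Tagged : DSpace D := DSet tagged_act_id tagged_act_comp.

Definition tag_in k : DMap (B k) Tagged :=
  to_DSet tagged_act_id tagged_act_comp
    (h := fun d (x : B k d) => existT _ k x) (fun _ _ _ _ => erefl).

Variables (S : DSpace D) (inj : forall k, DMap (B k) S).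
Hypothesis S_coprod : IsCoprod inj.

Definition coprod_tag : DMap S Tagged := sval (cid (S_coprod tag_in).1).

Lemma coprod_tag_in k d (x : B k d) : coprod_tag d (inj k d x) = existT _ k x.
Proof. by rewrite /coprod_tag; case: cid => h /= ->. Qed.

Lemma coprod_tagK d (z : S d) (t : tagged d) :
  coprod_tag d z = t -> z = inj (projT1 t) d (projT2 t).
Proof.
have [k [x ->]] := coprod_cover S_coprod z.
by rewrite coprod_tag_in => <-.
Qed.

Lemma coprod_in_inj k d : injective (inj k d).
Proof.
move=> x y /(congr1 (coprod_tag d)); rewrite !coprod_tag_in.
exact: inj_pair2.
Qed.

Lemma coprod_in_image_closed k e (U : set (B k e)) : closed U -> closed (inj k e @` U).
Proof.
move=> cU; apply: (coprod_closed S_coprod) => k'.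
have [k'k|k'k] := pselect (k' = k).
  subst k'; have -> // : inj k e @^-1` (inj k e @` U) = U.
  by apply: funext => x; exact: image_inj (@coprod_in_inj k e).
have -> : inj k' e @^-1` (inj k e @` U) = set0; last exact: closed0.
apply/seteqP; split => // x [y _] /(congr1 (coprod_tag e)).
by rewrite !coprod_tag_in => /(congr1 (@projT1 _ _)) /= /esym.
Qed.

End CoproductTags.

Section TopColimit.
Variables (D : Cat) (A : DSpace D).

Definition points := {d : Obj D & A d}.

Definition moves (x y : points) :=
  exists a b (f : Hom a b) (z : A a), x = existT _ a z /\ y = existT _ b (act A f z).

Local Notation same := (clos_refl_sym_trans points moves).

Definition orbit_class := {P : points -> Prop | exists x, P = same x}.

Definition class_of (x : points) : orbit_class := exist _ (same x) (ex_intro _ x erefl).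

Lemma class_of_eq x y : same x y -> class_of x = class_of y.
Proof.
move=> xy; apply: eq_exist; apply: funext => z; apply: propext.
by split => [/(rst_trans _ _ _ _ _ (rst_sym _ _ _ _ xy))|/(rst_trans _ _ _ _ _ xy)].
Qed.

Lemma class_of_surj (P : orbit_class) : exists x, P = class_of x.
Proof. by case: P => P [x Px]; exists x; exact: eq_exist. Qed.

Definition orbit_system : OpenSystem orbit_class.
Proof.
refine {| opens := fun U =>
  forall d, open [set a : A d | U (class_of (existT _ d a))] |}.
- by move=> d; exact: openT.
- by move=> U V oU oV d; exact: openI.
- by move=> J f oF d; apply: bigcup_open => j _; exact: oF.
Defined.

Definition orbit_space : topologicalType := topology_of orbit_system.

Definition to_orbit_space d (a : A d) : orbit_space := class_of (existT _ d a).

Lemma factor_through_same (T : Type) (t : forall d, A d -> T) :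
  (forall a b (f : Hom a b) x, t b (act A f x) = t a x) ->
  forall x y, same x y -> t (projT1 x) (projT2 x) = t (projT1 y) (projT2 y).
Proof.
move=> t_inv x y.
by elim=> {x y} [_ _ [a [b [f [z [-> ->]]]]] /=|//|x y _ ->|x y z _ -> _ ->];
  rewrite ?t_inv.
Qed.

Lemma orbit_space_colim : IsColimTop A orbit_space to_orbit_space.
Proof.
split; first by move=> d; apply/continuousP => W; exact.
split.
  move=> a b f x; apply/esym/class_of_eq; apply: rst_step.
  by exists a, b, f, x.
move=> T t t_cont t_inv.
pose tc (x : points) := t (projT1 x) (projT2 x).
pose h (P : orbit_space) : T := tc (sval (cid (svalP P))).
have hE x : h (class_of x) = tc x.
  rewrite /h; case: cid => y /= same_xy; apply/esym/factor_through_same => //.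
  by rewrite same_xy; exact: rst_refl.
exists h; split.
  split => [|d x]; last by rewrite /to_orbit_space hE.
  apply/continuousP => W oW; rewrite topology_of_open => d.
  have -> : [set a : A d | (h @^-1` W) (class_of (existT _ d a))] = t d @^-1` W.
    by apply/seteqP; split => a; rewrite /preimage /= hE.
  by move/continuousP: (t_cont d); exact.
move=> h' [_ h'E]; apply: funext => P.
by have [[d a] ->] := class_of_surj P; rewrite hE /tc /= -h'E.
Qed.

Lemma orbit_cocone_const (T : topologicalType) (t : forall d, A d -> T) :
  IsOrbit A -> (forall d, continuous (t d)) ->
  (forall a b (f : Hom a b) x, t b (act A f x) = t a x) ->
  forall d a d' a', t d a = t d' a'.
Proof.
move=> orbitA t_cont t_inv d a d' a'.
have [pt ptE] := orbitA _ _ orbit_space_colim.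
have [_ [_ colim]] := orbit_space_colim.
have [h [[_ hE] _]] := colim T t t_cont t_inv.
by rewrite -hE -(hE d') (ptE (to_orbit_space a)) (ptE (to_orbit_space a')).
Qed.

End TopColimit.

Section Fibers.
Variable D : Cat.

Lemma closed_embedding_lift (A X O : DSpace D) (g : DMap A X) (p : DMap O X) :
  (forall d, injective (g d)) -> (forall d U, closed U -> closed (g d @` U)) ->
  (forall d o, exists a, g d a = p d o) ->
  exists beta : DMap O A, forall d o, g d (beta d o) = p d o.
Proof.
move=> g_inj g_closed p_img.
pose beta d o := sval (cid (p_img d o)).
have betaE d o : g d (beta d o) = p d o by rewrite /beta; case: cid.
have beta_cont d : continuous (beta d).
  apply/continuous_closedP => U cU.
  have -> : beta d @^-1` U = p d @^-1` (g d @` U).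
    apply/seteqP; split => o /=; first by exists (beta d o); rewrite ?betaE.
    by case=> a Ua; rewrite -betaE => /g_inj <-.
  by move/continuous_closedP: (dmap_cont p d); apply; exact: g_closed.
have beta_nat a b (f : Hom a b) o : beta b (act O f o) = act A f (beta a o).
  by apply: (@g_inj b); rewrite betaE !dmap_nat betaE.
by exists (@Build_DMap D O A beta beta_cont beta_nat).
Qed.

Lemma fiber_iso (X : DSpace D) (C : topologicalType) (c : forall d, X d -> C) (x : C)
    (O : DSpace D) (p : DMap O X) (A : DSpace D) (g : DMap A X) :
  IsFiber X C c x O p -> (forall d, injective (g d)) ->
  (forall d a, c d (g d a) = x) ->
  (exists beta : DMap O A, forall d o, g d (beta d o) = p d o) -> DIso A O.
Proof.
move=> [p_fib fib] g_inj g_fib [beta betaE].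
have [[alpha alphaE] _] := fib A g g_fib.
exists alpha, beta; split => [d a|d o].
  by apply: (@g_inj d); rewrite betaE alphaE.
have [_ uniq] := fib O p p_fib.
apply: (uniq (comp_DMap alpha beta) (id_DMap O)) => // d' o'.
by rewrite /= alphaE betaE.
Qed.

End Fibers.

Lemma closed_setX (T U : topologicalType) (A : set T) (B : set U) :
  closed A -> closed B -> closed (A `*` B).
Proof.
move=> cA cB; have -> : A `*` B = fst @^-1` A `&` snd @^-1` B by [].
apply: closedI; apply: (continuous_closedP _).1 => //.
- by move=> p; exact: cvg_fst.
- by move=> p; exact: cvg_snd.
Qed.

Lemma set_val_continuous (T : topologicalType) (A : set T) :
  continuous (set_val : set_type A -> T).
Proof. exact: (@initial_continuous (A : Type) T set_val). Qed.

Lemma sqnorm_continuous n : continuous (@sqnorm n).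
Proof.
apply: (@continuous_big R^o _ +%R 0%R xpredT _ _) => [|i _].
  exact: add_continuous.
by move=> v; apply: continuousM; exact: coord_continuous.
Qed.

Definition on_sphere n (s : Disk n) := sqnorm (set_val s) = 1%R.

Lemma sphere_of n (s : Disk n) : on_sphere s -> {t : Sphere n | sphere_in_disk t = s}.
Proof. by move=> ss; exists (exist _ (set_val s) (mem_set ss)); exact: val_inj. Qed.

Lemma sphere_in_disk_inj n : injective (@sphere_in_disk n).
Proof. by move=> s t /(congr1 set_val) st; exact: val_inj. Qed.

Lemma sphere_in_disk_on_sphere n (t : Sphere n) : on_sphere (sphere_in_disk t).
Proof. by case: t => v vS; move/set_mem: (vS). Qed.

Lemma disk_set1_closed n (t : Disk n) : closed [set t].
Proof.
have -> : [set t] = set_val @^-1` [set set_val t].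
  by apply/seteqP; split => [s -> //|s /val_inj].
apply: (continuous_closedP _).1; first exact: set_val_continuous.
exact/accessible_closed_set1/hausdorff_accessible/norm_hausdorff.
Qed.

Lemma open_off_sphere n : open [set s : Disk n | ~ on_sphere s].
Proof.
have norm_cont : continuous (fun s : Disk n => sqnorm (set_val s)).
  move=> s; apply: continuous_comp; first exact: set_val_continuous.
  exact: sqnorm_continuous.
have closed1 : closed [set 1%R : R].
  exact/accessible_closed_set1/hausdorff_accessible/(@norm_hausdorff _ R^o).
exact: ((continuousP _).1 norm_cont _ (closed_openC closed1)).
Qed.

Lemma sphere_in_disk_nbhs n (t : Sphere n) (P : set (Sphere n)) : nbhs t P ->
  nbhs (sphere_in_disk t) [set s | forall t', sphere_in_disk t' = s -> P t'].
Proof.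
case=> _ [[M oM <-] Mt MP]; apply: (@filterS _ _ _ (set_val @^-1` M)).
  by move=> s Ms t' t's; apply: MP; rewrite /preimage -t's in Ms.
apply: open_nbhs_nbhs; split => //.
exact: ((continuousP _).1 (@set_val_continuous _ _) _ oM).
Qed.

Lemma sphere_image_closed n (B : topologicalType) (L : set (Sphere n * B)) :
  closed L -> closed [set (sphere_in_disk p.1, p.2) | p in L].
Proof.
move=> cL; rewrite -[X in closed X]setCK closedC openE => -[s b].
have [/sphere_of [t <-] notK|off _] := pselect (on_sphere s).
  have : nbhs (t, b) (~` L).
    apply: open_nbhs_nbhs; split; first exact: closed_openC.
    by move=> Ltb; apply: notK; exists (t, b).
  case=> -[P Q] /= [Pt Qb] PQL.
  exists ([set s | forall t', sphere_in_disk t' = s -> P t'], Q) => /=.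
    by split => //; exact: sphere_in_disk_nbhs.
  move=> [s' b'] /= [Ps' Qb'] [[t' b''] + [t's' b''b']].
  by rewrite b''b'; apply: PQL; split; [exact: Ps' | exact: Qb'].
exists ([set s | ~ on_sphere s], setT) => /=.
  split; last exact: filterT.
  by apply: open_nbhs_nbhs; split; [exact: open_off_sphere | exact: off].
move=> [s' b'] /= [off' _] [[t' b''] _ [t's' _]].
by apply: off'; rewrite -t's'; exact: sphere_in_disk_on_sphere.
Qed.

Record CellAttachment (D : Cat) (F : DSpace D -> Prop) (Xs : nat -> DSpace D)
    (js : forall n, DMap (Xs n) (Xs n.+1)) (i : nat) := {
  cell_index : Type;
  cell_orbit : cell_index -> DSpace D;
  cell_sum : DSpace D;
  cell_sum_in : forall k, DMap (cell_orbit k) cell_sum;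
  cell_orbit_F : forall k, F (cell_orbit k);
  cell_sum_coprod : IsCoprod cell_sum_in;
  attaching : DMap (ProdC (Sphere i) cell_sum) (Xs i);
  characteristic : DMap (ProdC (Disk i) cell_sum) (Xs i.+1);
  cell_pushout : IsPushout attaching
    (fun d (p : ProdC (Sphere i) cell_sum d) =>
       ((sphere_in_disk p.1, p.2) : ProdC (Disk i) cell_sum d))
    (js i) characteristic }.

Lemma cell_attachment_of (D : Cat) (F : DSpace D -> Prop) (Xs : nat -> DSpace D)
    (js : forall n, DMap (Xs n) (Xs n.+1)) (i : nat) :
  (exists (I : Type) (Ak : I -> DSpace D) (A : DSpace D)
          (inj : forall k, DMap (Ak k) A),
     (forall k, F (Ak k)) /\ IsCoprod inj /\
     exists (phi : DMap (ProdC (Sphere i) A) (Xs i))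
            (Phi : DMap (ProdC (Disk i) A) (Xs i.+1)),
       IsPushout phi
         (fun d (p : ProdC (Sphere i) A d) =>
            ((sphere_in_disk p.1, p.2) : ProdC (Disk i) A d))
         (js i) Phi) ->
  CellAttachment F js i.
Proof.
move=> /cid[I /cid[Ak /cid[A /cid[inj [AkF [A_coprod /cid[phi /cid[Phi po]]]]]]]].
exact: (@Build_CellAttachment D F Xs js i I Ak A inj AkF A_coprod phi Phi po).
Qed.

Section CWComplex.
Variables (D : Cat) (F : DSpace D -> Prop) (X : DSpace D).
Hypothesis F_orbit : forall A, F A -> IsOrbit A.
Variables (Xs : nat -> DSpace D) (js : forall n, DMap (Xs n) (Xs n.+1)).
Variable ins : forall n, DMap (Xs n) X.
Hypothesis Xs0_empty : EmptyD (Xs 0).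
Hypothesis X_colim : IsSeqColim js ins.
Variable cell : forall i, CellAttachment F js i.

Local Notation Ak i := (@cell_orbit _ _ _ _ _ (cell i)).
Local Notation A i := (cell_sum (cell i)).
Local Notation inj i := (@cell_sum_in _ _ _ _ _ (cell i)).
Local Notation phi i := (attaching (cell i)).
Local Notation Phi i := (characteristic (cell i)).
Local Notation A_coprod i := (@cell_sum_coprod _ _ _ _ _ (cell i)).
Local Notation tag i := (coprod_tag (A_coprod i)).

Lemma cell_boundary n d (t : Sphere n) (q : A n d) :
  ins n.+1 d (Phi n d (sphere_in_disk t, q)) = ins n d (phi n d (t, q)).
Proof. by have /= <- := (cell_pushout (cell n)).1 d (t, q); exact: X_colim.1. Qed.

(* The label of a point is the open cell containing it: the dimension, the point
   of the open disk, and the summand of [A n] together with the point in it. *)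
Definition label (d : Obj D) := {n : nat & (Disk n * tagged (Ak n) d)%type}.

Definition label_act a b (f : Hom a b) (l : label a) : label b :=
  existT _ (projT1 l) ((projT2 l).1, tagged_act f (projT2 l).2).

Lemma label_act_id a (l : label a) : label_act (idm a) l = l.
Proof. by case: l => n [s x]; rewrite /label_act /= tagged_act_id. Qed.

Lemma label_act_comp a b c (g : Hom b c) (f : Hom a b) (l : label a) :
  label_act (comp g f) l = label_act g (label_act f l).
Proof. by case: l => n [s x]; rewrite /label_act /= tagged_act_comp. Qed.

Definition Labels : DSpace D := DSet label_act_id label_act_comp.

Definition extend_label n (g : DMap (Xs n) Labels) d (p : ProdC (Disk n) (A n) d) :
    label d :=
  match pselect (on_sphere p.1) with
  | left on => g d (phi n d (sval (sphere_of on), p.2))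
  | right _ => existT _ n (p.1, tag n d p.2)
  end.

Lemma extend_label_nat n (g : DMap (Xs n) Labels) a b (f : Hom a b) p :
  extend_label g (act (ProdC (Disk n) (A n)) f p) = label_act f (extend_label g p).
Proof.
case: p => s q; rewrite /extend_label /=; case: pselect => [on|_] /=.
  rewrite -[label_act f _]/(act Labels f _) -(dmap_nat g); congr (g b _).
  exact: (dmap_nat (phi n) f (sval (sphere_of on), q)).
by rewrite (dmap_nat (tag n)).
Qed.

Lemma extend_label_boundary n (g : DMap (Xs n) Labels) d (t : Sphere n) (q : A n d) :
  extend_label g ((sphere_in_disk t, q) : ProdC (Disk n) (A n) d) =
  g d (phi n d (t, q)).
Proof.
rewrite /extend_label /=; case: pselect => [on|]; last first.
  by case; exact: sphere_in_disk_on_sphere.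
by case: (sphere_of on) => t' /= /sphere_in_disk_inj ->.
Qed.

Lemma stage_label_step n (g : DMap (Xs n) Labels) :
  {g' : DMap (Xs n.+1) Labels | (forall d x, g' d (js n d x) = g d x) /\
                                (forall d p, g' d (Phi n d p) = extend_label g p)}.
Proof.
apply: cid.
have compat d (p : ProdC (Sphere n) (A n) d) :
    g d (phi n d p) =
    extend_label g ((sphere_in_disk p.1, p.2) : ProdC (Disk n) (A n) d).
  by case: p => t q; rewrite extend_label_boundary.
have [[g' g'E] _] := (cell_pushout (cell n)).2 Labels g
  (@Build_DMap D _ Labels (@extend_label n g) (fun d => @indisc_continuous _ _ _)
     (@extend_label_nat n g)) compat.
by exists g'.
Qed.

Fixpoint stage_label n : DMap (Xs n) Labels :=
  match n with
  | 0 => to_DSet label_act_id label_act_comp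
           (h := fun d x => False_rect _ (Xs0_empty x))
           (fun a b f x => False_ind _ (Xs0_empty x))
  | m.+1 => sval (stage_label_step (stage_label m))
  end.

Lemma stage_label_js n d (x : Xs n d) :
  stage_label n.+1 d (js n d x) = stage_label n d x.
Proof. exact: (svalP (stage_label_step (stage_label n))).1. Qed.

Lemma stage_label_Phi n d p :
  stage_label n.+1 d (Phi n d p) = extend_label (stage_label n) p.
Proof. exact: (svalP (stage_label_step (stage_label n))).2. Qed.

Definition label_of : DMap X Labels :=
  sval (cid ((X_colim.2 Labels stage_label stage_label_js).1)).

Lemma label_of_ins n d (x : Xs n d) : label_of d (ins n d x) = stage_label n d x.
Proof. by rewrite /label_of; case: cid => h /= hE; exact: hE. Qed.

Lemma label_of_interior n d (s : Disk n) (q : A n d) : ~ on_sphere s ->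
  label_of d (ins n.+1 d (Phi n d (s, q))) = existT _ n (s, tag n d q).
Proof.
by move=> s_int; rewrite label_of_ins stage_label_Phi /extend_label; case: pselect.
Qed.

Lemma stage_label_lt n d (x : Xs n d) : projT1 (stage_label n d x) < n.
Proof.
elim: n d x => [|n IH] d x; first by case: (Xs0_empty x).
have [[y ->]|[[s q] ->]] := pushout_cover (cell_pushout (cell n)) x.
  by rewrite stage_label_js; apply: leqW; exact: IH.
rewrite stage_label_Phi /extend_label; case: pselect => //= on.
by apply: leqW; exact: IH.
Qed.

Definition cell_map i k (t : Disk i) : DMap (Ak i k) X :=
  comp_DMap (ins i.+1) (comp_DMap (Phi i) (pair_DMap t (inj i k))).

Lemma label_cell_map i k t d (a : Ak i k d) : ~ on_sphere t ->
  label_of d (cell_map k t d a) = existT _ i (t, existT _ k a).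
Proof. by move=> t_int; rewrite /= label_of_interior // coprod_tag_in. Qed.

Lemma cell_map_inj i (k : cell_index (cell i)) (t : Disk i) :
  ~ on_sphere t -> forall d, injective (cell_map k t d).
Proof.
move=> t_int d a a' /(congr1 (label_of d)); rewrite !label_cell_map //.
by move=> /existT_nat_inj [] /(inj_pair2 _ _ _ _ _).
Qed.

Lemma cell_cover d (z : X d) :
  exists i t k (a : Ak i k d), ~ on_sphere t /\ z = cell_map k t d a.
Proof.
have [n [x ->]] := seqcolim_cover X_colim z; clear z.
elim: n d x => [|n IH] d x; first by case: (Xs0_empty x).
have [[y ->]|[[s q] ->]] := pushout_cover (cell_pushout (cell n)) x.
  by rewrite (X_colim.1 n d y); exact: IH.
have [/sphere_of [t <-]|s_int] := pselect (on_sphere s).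
  by rewrite cell_boundary; exact: IH.
have [k [a ->]] := coprod_cover (A_coprod n) q.
by exists n, s, k, a.
Qed.

Section CellImage.
Variables (i : nat) (k : cell_index (cell i)) (t : Disk i).
Hypothesis t_int : ~ on_sphere t.
Variables (e : Obj D) (U : set (Ak i k e)).

Local Notation W := (cell_map k t e @` U).

Lemma cell_map_preimage_own :
  Phi i e @^-1` (ins i.+1 e @^-1` W) = [set t] `*` (inj i k e @` U).
Proof.
apply/seteqP; split => [[s q] /=|[s q] [/= -> [a Ua /= <-]]]; last by exists a.
have [/sphere_of [t' <-] [a Ua]|s_int [a Ua]] := pselect (on_sphere s).
  rewrite cell_boundary => E.
  have := stage_label_lt (phi i e (t', q)).
  by rewrite -label_of_ins -E label_cell_map //= ltnn.
move=> /(congr1 (label_of e)); rewrite label_cell_map // label_of_interior //.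
by move=> /existT_nat_inj [-> /esym/coprod_tagK ->]; split => //; exists a.
Qed.

Lemma cell_map_preimage_other n : n <> i ->
  Phi n e @^-1` (ins n.+1 e @^-1` W) =
  [set (sphere_in_disk p.1, p.2) | p in phi n e @^-1` (ins n e @^-1` W)].
Proof.
move=> n_i; apply/seteqP; split => [[s q] /=|_ [[t' q] /= Wtq <-]]; last first.
  by rewrite /preimage /= cell_boundary.
have [/sphere_of [t' <-] Wtq|s_int] := pselect (on_sphere s).
  by exists (t', q); rewrite // /preimage -cell_boundary.
case=> a _ /(congr1 (fun z => projT1 (label_of e z))).
by rewrite label_cell_map // label_of_interior //= => /esym.
Qed.

Lemma cell_map_closed : closed U -> closed W.
Proof.
move=> cU; apply: (seqcolim_closed X_colim) => n; elim: n => [|n IH].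
  have -> : ins 0 e @^-1` W = set0; last exact: closed0.
  by apply/seteqP; split => // x; case: (Xs0_empty x).
apply: (pushout_closed _ _ (cell_pushout (cell n))) => //.
- exact: dmap_nat.
- have -> : js n e @^-1` (ins n.+1 e @^-1` W) = ins n e @^-1` W => //.
  by apply: funext => x; exact: (congr1 (fun z => W z) (X_colim.1 n e x)).
have [->|n_i] := eqVneq n i.
  rewrite cell_map_preimage_own; apply: closed_setX; first exact: disk_set1_closed.
  exact: (coprod_in_image_closed (A_coprod i)).
rewrite cell_map_preimage_other; last exact/eqP.
apply: sphere_image_closed; move/continuous_closedP: (dmap_cont (phi n) e).
by apply; exact: IH.
Qed.

End CellImage.

Definition cell_type d (z : X d) : {n : nat & (Disk n * cell_index (cell n))%type} :=
  let l := label_of d z in existT _ (projT1 l) ((projT2 l).1, projT1 (projT2 l).2).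

Lemma cell_type_act a b (f : Hom a b) (z : X a) : cell_type (act X f z) = cell_type z.
Proof. by rewrite /cell_type (dmap_nat label_of). Qed.

Lemma cell_type_cell_map i k (t : Disk i) d (a : Ak i k d) : ~ on_sphere t ->
  cell_type (cell_map k t d a) = existT _ i (t, k).
Proof. by move=> t_int; rewrite /cell_type label_cell_map. Qed.

Lemma cell_type_colim (C : topologicalType) (c : forall d, X d -> C) :
  IsColimTop X C c -> forall d d' (z : X d) (z' : X d'), c d z = c d' z' ->
  cell_type z = cell_type z'.
Proof.
move=> [_ [_ colim]] d d' z z'.
have [h [[_ hE] _]] := colim (Indisc _) cell_type (fun d => @indisc_continuous _ _ _)
  cell_type_act.
by rewrite -!hE => ->.
Qed.

Lemma cell_map_colim_const (C : topologicalType) (c : forall d, X d -> C) i k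
    (t : Disk i) :
  IsColimTop X C c ->
  forall d a d' a', c d (cell_map k t d a) = c d' (cell_map k t d' a').
Proof.
move=> Hc; apply: orbit_cocone_const; first exact: F_orbit (cell_orbit_F k).
  by move=> d y; apply: continuous_comp; [exact: dmap_cont | exact: Hc.1].
by move=> a b f y; rewrite (dmap_nat (cell_map k t)) Hc.2.1.
Qed.

Lemma fiber_in_cell (C : topologicalType) (c : forall d, X d -> C) i k (t : Disk i)
    d0 (a0 : Ak i k d0) (O : DSpace D) (p : DMap O X) :
  IsColimTop X C c -> ~ on_sphere t ->
  (forall d o, c d (p d o) = c d0 (cell_map k t d0 a0)) ->
  forall d o, exists a, cell_map k t d a = p d o.
Proof.
move=> Hc t_int p_fib d o.
have [n [s [k' [a [s_int E]]]]] := cell_cover (p d o).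
have := cell_type_colim Hc (p_fib d o).
rewrite E !cell_type_cell_map // => /[dup] /(congr1 (@projT1 _ _)) /= ni; subst n.
by move=> /existT_nat_inj [-> k'k]; subst k'; exists a.
Qed.

Lemma CW_of_type : OfType F X.
Proof.
move=> C c Hc x O p.
have [d0 [z0 ->]] := colimtop_cover Hc x.
have [i [t [k [a0 [t_int ->]]]]] := cell_cover z0 => fib.
exists (Ak i k); split; first exact: cell_orbit_F.
apply: (fiber_iso fib (cell_map_inj t_int)).
  by move=> d a; exact: cell_map_colim_const.
apply: closed_embedding_lift; first exact: cell_map_inj.
  by move=> d U; exact: cell_map_closed.
exact: fiber_in_cell Hc t_int fib.1.
Qed.

End CWComplex.

Theorem proposition6p4 (D : Cat) (F : DSpace D -> Prop)
  (HF : forall A, F A -> IsOrbit A)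
  (X : DSpace D) (HX : HasDCW F X) :
  OfType F X.
Proof.
case: HX => Xs [js [ins [Xs0_empty [X_colim cells]]]].
exact: (CW_of_type HF Xs0_empty X_colim (fun i => cell_attachment_of (cells i))).
Qed.
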